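(* There exist vectors $\{\phi_i\}_{i=1}^5$ in $\mathbb R^3$ which do phase retrieval, but such that the hyperplanes $\{\phi_i^\perp\}_{i=1}^5$ do not do norm retrieval.
   Context: A family of vectors $\{\phi_i\}$ in $\mathbb R^d$ does phase retrieval if $|\langle x,\phi_i\rangle|=|\langle y,\phi_i\rangle|$ for all $i$ implies $x=\pm y$. A family of subspaces $\{W_i\}$ with orthogonal projections $P_i$ does norm retrieval if $\|P_ix\|=\|P_iy\|$ for all $i$ implies $\|x\|=\|y\|$. Here $\phi_i^\perp=\{x\in\mathbb R^3:\langle x,\phi_i\rangle=0\}$. *)

From HB Require Import structures.
From mathcomp Require Import all_boot all_order all_algebra.
From mathcomp Require Import reals.
Set Implicit Arguments. Unset Strict Implicit. Unset Printing Implicit Defensive.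
Import Order.TTheory GRing.Theory Num.Theory.
Local Open Scope ring_scope.

Definition dotv (R : realType) (d : nat) (u v : 'rV[R]_d) : R :=
  \sum_(k < d) u 0 k * v 0 k.

Definition normv (R : realType) (d : nat) (u : 'rV[R]_d) : R :=
  Num.sqrt (dotv u u).

Definition phase_retrieval (R : realType) (d m : nat) (phi : 'I_m -> 'rV[R]_d) : Prop :=
  forall x y : 'rV[R]_d,
    (forall i, `|dotv x (phi i)| = `|dotv y (phi i)|) -> x = y \/ x = - y.

Definition perp (R : realType) (d : nat) (phi : 'rV[R]_d) : 'rV[R]_d -> Prop :=
  fun x => dotv x phi = 0.

Definition is_orth_proj (R : realType) (d : nat) (W : 'rV[R]_d -> Prop)
    (P : 'rV[R]_d -> 'rV[R]_d) : Prop :=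
  forall x, W (P x) /\ (forall w, W w -> dotv (x - P x) w = 0).

Definition norm_retrieval (R : realType) (d m : nat) (W : 'I_m -> 'rV[R]_d -> Prop) : Prop :=
  forall P : 'I_m -> 'rV[R]_d -> 'rV[R]_d,
    (forall i, is_orth_proj (W i) (P i)) ->
    forall x y : 'rV[R]_d,
      (forall i, normv (P i x) = normv (P i y)) -> normv x = normv y.

(* The five vectors (2,1,0), (2,-1,0), (4,1,2), (4,-1,2), (4,1,-2) have full
   spark: any three of them span R^3.  If |<x,phi_i>| = |<y,phi_i>| for all i,
   each phi_i is orthogonal to x - y or to x + y, so one of the two is
   orthogonal to three of the phi_i and vanishes; this is phase retrieval.
   On the other hand every phi_i lies on the cone a^2 = 4b^2 + 3c^2, which for
   x = (2,0,0) and y = (0,1,0) reads <x,phi>^2 - <y,phi>^2 = (|x|^2 - |y|^2) |phi|^2.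
   Since |P x|^2 = |x|^2 - <x,phi>^2/|phi|^2 for the projection P onto phi^perp,
   the projections of x and y onto every hyperplane phi_i^perp have equal norms,
   although |x| = 2 and |y| = 1. *)
From HB Require Import structures.
From mathcomp Require Import all_boot all_order all_algebra.
From mathcomp Require Import reals.
From mathcomp Require Import ring lra zify.
Set Implicit Arguments. Unset Strict Implicit. Unset Printing Implicit Defensive.
Import GRing.Theory Num.Theory.
Local Open Scope ring_scope.

Section InnerProduct.
Variables (R : realType) (d : nat).
Implicit Types (u v w : 'rV[R]_d) (a : R).

Lemma dotvC u v : dotv u v = dotv v u.
Proof. by apply: eq_bigr => k _; rewrite mulrC. Qed.

Lemma dotvDl u v w : dotv (u + v) w = dotv u w + dotv v w.
Proof. by rewrite /dotv -big_split; apply: eq_bigr => k _; rewrite mxE mulrDl. Qed.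

Lemma dotvNl u v : dotv (- u) v = - dotv u v.
Proof. by rewrite /dotv -sumrN; apply: eq_bigr => k _; rewrite mxE mulNr. Qed.

Lemma dotvBl u v w : dotv (u - v) w = dotv u w - dotv v w.
Proof. by rewrite dotvDl dotvNl. Qed.

Lemma dotvZl a u v : dotv (a *: u) v = a * dotv u v.
Proof. by rewrite /dotv mulr_sumr; apply: eq_bigr => k _; rewrite mxE mulrA. Qed.

Lemma dotvBr u v w : dotv u (v - w) = dotv u v - dotv u w.
Proof. by rewrite dotvC dotvBl !(dotvC u). Qed.

Lemma dotvZr a u v : dotv u (a *: v) = a * dotv u v.
Proof. by rewrite dotvC dotvZl dotvC. Qed.

Lemma dotv_ge0 u : 0 <= dotv u u.
Proof. by apply: sumr_ge0 => k _; rewrite -expr2 sqr_ge0. Qed.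

Lemma normvK u : normv u ^+ 2 = dotv u u.
Proof. by rewrite sqr_sqrtr // dotv_ge0. Qed.

End InnerProduct.

Section FullSpark.
Variables (R : realType) (d m : nat) (phi : 'I_m -> 'rV[R]_d).

(* Every d of the phi_i span R^d, i.e. no nonzero vector is orthogonal to d of them. *)
Definition full_spark : Prop :=
  forall u : 'rV[R]_d, u != 0 -> (#|[set i | dotv u (phi i) == 0%R]| < d)%N.

Lemma full_spark_phase_retrieval : full_spark -> (2 * d <= m + 1)%N ->
  phase_retrieval phi.
Proof.
move=> spark dm x y same_abs.
pose zeros u := [set i | dotv u (phi i) == 0].
have cover : zeros (x - y) :|: zeros (x + y) = [set: 'I_m].
  apply/setP => i; rewrite !inE dotvBl dotvDl subr_eq0 addr_eq0.
  by rewrite -eqr_norm2 same_abs eqxx.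
have [/eqP|xBy_neq0] := eqVneq (x - y) 0; first by rewrite subr_eq0 => /eqP; left.
have [/eqP|xDy_neq0] := eqVneq (x + y) 0; first by rewrite addr_eq0 => /eqP; right.
exfalso; have := (leq_card_setU (zeros (x - y)) (zeros (x + y))).1.
rewrite cover cardsT card_ord.
by have := spark _ xBy_neq0; have := spark _ xDy_neq0; rewrite /zeros; lia.
Qed.

End FullSpark.

Section HyperplaneProjection.
Variables (R : realType) (d : nat) (p : 'rV[R]_d).
Hypothesis p_neq0 : dotv p p != 0.

Definition hyperplane_proj (x : 'rV[R]_d) : 'rV[R]_d :=
  x - (dotv x p / dotv p p) *: p.

Lemma hyperplane_proj_is_orth_proj : is_orth_proj (perp p) hyperplane_proj.
Proof.
move=> x; split; first by rewrite /perp dotvBl dotvZl divfK // subrr.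
move=> w; rewrite /perp => wp0.
by rewrite /hyperplane_proj opprB addrC subrK dotvZl (dotvC p) wp0 mulr0.
Qed.

Lemma dotv_hyperplane_proj x :
  dotv (hyperplane_proj x) (hyperplane_proj x) = dotv x x - dotv x p ^+ 2 / dotv p p.
Proof.
by rewrite /hyperplane_proj !(dotvBl, dotvBr, dotvZl, dotvZr) (dotvC p x); field.
Qed.

End HyperplaneProjection.

Lemma hyperplanes_not_norm_retrieval (R : realType) (d m : nat)
    (phi : 'I_m -> 'rV[R]_d) (x y : 'rV[R]_d) :
  (forall i, dotv (phi i) (phi i) != 0) ->
  (forall i, dotv x (phi i) ^+ 2 - dotv y (phi i) ^+ 2
             = (dotv x x - dotv y y) * dotv (phi i) (phi i)) ->
  dotv x x != dotv y y -> ~ norm_retrieval (fun i => perp (phi i)).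
Proof.
move=> phi_neq0 on_cone /eqP xy_neq nr; apply: xy_neq.
rewrite -!normvK; congr (_ ^+ 2).
apply: (nr _ (fun i => hyperplane_proj_is_orth_proj (phi_neq0 i))) => i.
rewrite /normv !dotv_hyperplane_proj //; congr Num.sqrt.
apply: (mulIf (phi_neq0 i)); rewrite !mulrBl !divfK //.
by move: (on_cone i); lra.
Qed.

Definition row3 (R : realType) (a b c : R) : 'rV[R]_3 := \row_(k < 3) [:: a; b; c]`_k.

Definition i0 : 'I_3 := @Ordinal 3 0 isT.
Definition i1 : 'I_3 := @Ordinal 3 1 isT.
Definition i2 : 'I_3 := @Ordinal 3 2 isT.

Lemma dotv3 (R : realType) (u v : 'rV[R]_3) :
  dotv u v = u 0 i0 * v 0 i0 + u 0 i1 * v 0 i1 + u 0 i2 * v 0 i2.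
Proof.
rewrite /dotv !big_ord_recl big_ord0 addr0 addrA.
by congr (_ * _ + _ * _ + _ * _); congr (_ _ _); apply: val_inj.
Qed.

Lemma row3_eq0 (R : realType) (u : 'rV[R]_3) :
  u 0 i0 = 0 -> u 0 i1 = 0 -> u 0 i2 = 0 -> u = 0.
Proof.
move=> u0 u1 u2; apply/rowP => -[[|[|[|//]]] k3]; rewrite mxE;
  [rewrite -u0 | rewrite -u1 | rewrite -u2]; congr (u _ _); exact: val_inj.
Qed.

Definition phi5 (R : realType) : 'I_5 -> 'rV[R]_3 := fun i =>
  [:: row3 2 1 0; row3 2 (-1) 0; row3 4 1 2; row3 4 (-1) 2; row3 4 1 (-2)]`_i.

Lemma phi5_full_spark (R : realType) : full_spark (phi5 R).
Proof.
move=> u; apply: contraR; rewrite -leqNgt => three_zeros; apply/eqP.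
move: three_zeros; rewrite -sum1_card big_mkcond /= !big_ord_recr big_ord0 /=.
rewrite !inE /phi5 /= !dotv3 !mxE /=.
by do 5 case: eqP => ?; move=> //= _; apply: row3_eq0; lra.
Qed.

Lemma phi5_neq0 (R : realType) (i : 'I_5) : dotv (phi5 R i) (phi5 R i) != 0.
Proof.
by apply: lt0r_neq0; case: i => -[|[|[|[|[|//]]]]] i5; rewrite dotv3 !mxE /=; lra.
Qed.

Lemma phi5_on_cone (R : realType) (i : 'I_5) :
  phi5 R i 0 i0 ^+ 2 = 4 * phi5 R i 0 i1 ^+ 2 + 3 * phi5 R i 0 i2 ^+ 2.
Proof. by case: i => -[|[|[|[|[|//]]]]] i5; rewrite !mxE /=; lra. Qed.

Theorem mainTheorem5 (R : realType) :
  exists phi : 'I_5 -> 'rV[R]_3,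
    phase_retrieval phi /\ ~ norm_retrieval (fun i => perp (phi i)).
Proof.
exists (phi5 R); split; first exact: full_spark_phase_retrieval (@phi5_full_spark R) _.
apply: (@hyperplanes_not_norm_retrieval _ _ _ _ (row3 2 0 0) (row3 0 1 0)).
- exact: phi5_neq0.
- by move=> i; have := phi5_on_cone R i; rewrite !dotv3 !mxE /=; lra.
- by rewrite !dotv3 !mxE /=; apply/eqP; lra.
Qed.
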